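(* Let $\mathcal{X}=\mathcal{Y}=\{0,1\}$ and let $d:\mathcal{X}\times\mathcal{Y}\to\mathbb{R}_{\mathrm{c}}$ be the single-letter distortion measure given by the matrix $d=\begin{bmatrix}0 & d_{0,1}\\ d_{1,0} & 0\end{bmatrix}$ with $d_{0,1}>0$ and $d_{1,0}>0$ computable. Then there exist a computable sequence of input distributions $(P_{X,n})_{n\in\mathbb{N}}$ in $\mathcal{P}_{\mathrm{c}}(\mathcal{X})$ and a computable maximal distortion level $D_{\max}\in\mathbb{R}_{\mathrm{c}}$ such that no function $F_{\mathrm{opt}}$ computing a sequence of optimal transition probability matrices $P^{*}_{Y|X,n}\in\mathcal{P}_{\mathrm{opt}}(d,D_{\max},P_{X,n})$ is Banach–Mazur computable.
   Context: A real number is computable if it is the effective limit of a computable sequence of rationals (with a recursive modulus of convergence); $\mathbb{R}_{\mathrm{c}}$ denotes the computable reals, a sequence of reals (or vectors/matrices) is computable if this can be done uniformly in the index, and $\mathcal{P}_{\mathrm{c}}(\mathcal{X})$ denotes the probability distributions on $\mathcal{X}$ with computable entries. For a source distribution $P_X$, distortion measure $d$ and level $D$, the rate distortion function is $R(D)=\inf\{I(X;Y): P_{Y|X},\ \sum_{x,y}P_X(x)P_{Y|X}(y|x)d(x,y)\leq D\}$ over all test channels $P_{Y|X}$, and $\mathcal{P}_{\mathrm{opt}}(d,D,P_X)$ is the set of test channels attaining the minimum. The maximal distortion is $D_{\max}=\min_{y}\sum_x P_X(x)d(x,y)$. A function $F_{\mathrm{opt}}$ mapping inputs (source distribution, distortion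 level) to an optimal test channel is Banach–Mazur computable if it maps every computable sequence of inputs to a computable sequence of outputs. *)

From Stdlib Require Import Reals List Arith.
Import ListNotations.
Open Scope R_scope.

Inductive code : Type :=
| cZero : code
| cSucc : code
| cProj : nat -> code
| cComp : code -> list code -> code
| cPrec : code -> code -> code
| cMin  : code -> code.

Inductive eval : code -> list nat -> nat -> Prop :=
| eZero v : eval cZero v 0
| eSucc x v : eval cSucc (x :: v) (S x)
| eProj i v : (i < length v)%nat -> eval (cProj i) v (nth i v 0%nat)
| eComp f gs v ys y : evals gs v ys -> eval f ys y -> eval (cComp f gs) v y
| ePrec0 f g v y : eval f v y -> eval (cPrec f g) (0%nat :: v) y
| ePrecS f g n v r y :
    eval (cPrec f g) (n :: v) r -> eval g (n :: r :: v) y ->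
    eval (cPrec f g) (S n :: v) y
| eMin f v n :
    eval f (n :: v) 0%nat ->
    (forall m, (m < n)%nat -> exists k, eval f (m :: v) (S k)) ->
    eval (cMin f) v n
with evals : list code -> list nat -> list nat -> Prop :=
| esNil v : evals [] v []
| esCons g gs v y ys : eval g v y -> evals gs v ys -> evals (g :: gs) v (y :: ys).

Definition recursive1 (f : nat -> nat) : Prop :=
  exists c : code, forall n, eval c [n] (f n).
Definition recursive2 (f : nat -> nat -> nat) : Prop :=
  exists c : code, forall n k, eval c [n; k] (f n k).

Definition qval (a b c : nat) : R := (INR a - INR b) / INR (S c).

Definition computable_real (x : R) : Prop :=
  exists a b c e : nat -> nat,
    recursive1 a /\ recursive1 b /\ recursive1 c /\ recursive1 e /\
    forall N k, (e N <= k)%nat -> Rabs (qval (a k) (b k) (c k) - x) <= / 2 ^ N.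

Definition computable_seq (x : nat -> R) : Prop :=
  exists a b c e : nat -> nat -> nat,
    recursive2 a /\ recursive2 b /\ recursive2 c /\ recursive2 e /\
    forall n N k, (e n N <= k)%nat ->
      Rabs (qval (a n k) (b n k) (c n k) - x n) <= / 2 ^ N.

(* ---------- rate distortion on X = Y = {0,1} (false = 0, true = 1) ---------- *)
Definition sum2 (f : bool -> R) : R := f false + f true.

Definition is_dist (P : bool -> R) : Prop :=
  (forall x, 0 <= P x) /\ sum2 P = 1.

(* test channel W x y = P_{Y|X}(y|x) *)
Definition is_channel (W : bool -> bool -> R) : Prop :=
  forall x, is_dist (W x).

Definition out_dist (P : bool -> R) (W : bool -> bool -> R) (y : bool) : R :=
  sum2 (fun x => P x * W x y).

Definition mutual_info (P : bool -> R) (W : bool -> bool -> R) : R :=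
  sum2 (fun x => sum2 (fun y =>
    let j := P x * W x y in
    if Req_EM_T j 0 then 0
    else j * ln (j / (P x * out_dist P W y)) / ln 2)).

Definition exp_distortion (d : bool -> bool -> R) (P : bool -> R)
  (W : bool -> bool -> R) : R :=
  sum2 (fun x => sum2 (fun y => P x * W x y * d x y)).

Definition admissible (d : bool -> bool -> R) (D : R) (P : bool -> R)
  (W : bool -> bool -> R) : Prop :=
  is_channel W /\ exp_distortion d P W <= D.

Definition optimal_channel (d : bool -> bool -> R) (D : R) (P : bool -> R)
  (W : bool -> bool -> R) : Prop :=
  admissible d D P W /\
  forall W', admissible d D P W' -> mutual_info P W <= mutual_info P W'.

Definition Dmax (d : bool -> bool -> R) (P : bool -> R) : R :=
  Rmin (sum2 (fun x => P x * d x false)) (sum2 (fun x => P x * d x true)).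

Definition dmat (d01 d10 : R) (x y : bool) : R :=
  match x, y with
  | false, true => d01
  | true, false => d10
  | _, _ => 0
  end.

Definition BM_computable
  (F : (bool -> R) -> R -> (bool -> bool -> R)) : Prop :=
  forall (P : nat -> bool -> R) (D : nat -> R),
    (forall n, is_dist (P n)) -> (forall n, 0 <= D n) ->
    (forall x, computable_seq (fun n => P n x)) -> computable_seq D ->
    forall x y, computable_seq (fun n => F (P n) (D n) x y).

From Stdlib Require Import Reals Lra List Arith Lia Classical ClassicalEpsilon.
Import ListNotations.
Open Scope nat_scope.

(* The source [P_n] tilts the distribution that makes both outputs equally
   costly, so that the cost gap [P_n(1) d10 - P_n(0) d01] is a fixed positive
   multiple of a computable real [diag n] whose sign records the behaviour of
   the n-th program on input n: [+2^-h] if it halts at time h with output 0,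
   [-2^-h] if it halts with another output, [0] if it diverges.  The sequence
   is computable although the halting problem is not: its stage-k
   approximation is 0 until halting and exact afterwards, so its error is
   either 0 or [2^-h < 2^-k].  At [D = Dmax] the constant channel onto the cheaper output
   is admissible with zero mutual information, so an optimal channel has zero
   mutual information too; its output is then independent of its input and the
   distortion constraint forces [W(1|0)] to be 1 or 0 according to the sign of
   the gap.  If [F_opt] were Banach-Mazur computable, the program that reads
   [W_n(1|0)] to precision 1/4 and outputs 0 exactly when it is at most 1/2
   would, run on its own code, contradict the sign of [diag].  Running programs
   on codes requires a universal machine, obtained by arithmetising an abstract
   machine for mu-recursive codes. *)

Lemma eval_proj i v : i < length v -> eval (cProj i) v (nth i v 0).
Proof. now constructor. Qed.

Lemma eval_comp1 f g v y z : eval g v y -> eval f [y] z -> eval (cComp f [g]) v z.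
Proof. intros Hg Hf; econstructor; [repeat constructor; eauto | exact Hf]. Qed.

Lemma eval_comp2 f g1 g2 v y1 y2 z :
  eval g1 v y1 -> eval g2 v y2 -> eval f [y1; y2] z -> eval (cComp f [g1; g2]) v z.
Proof. intros H1 H2 Hf; econstructor; [repeat constructor; eauto | exact Hf]. Qed.

Lemma eval_comp3 f g1 g2 g3 v y1 y2 y3 z :
  eval g1 v y1 -> eval g2 v y2 -> eval g3 v y3 -> eval f [y1; y2; y3] z ->
  eval (cComp f [g1; g2; g3]) v z.
Proof. intros H1 H2 H3 Hf; econstructor; [repeat constructor; eauto | exact Hf]. Qed.

Ltac solve_eval_proj := apply eval_proj; simpl; lia.

Fixpoint code_num (n : nat) : code :=
  match n with 0 => cZero | S m => cComp cSucc [code_num m] end.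

Definition code_pred : code := cPrec cZero (cProj 0).
Definition code_add : code := cPrec (cProj 0) (cComp cSucc [cProj 1]).
Definition code_sub : code :=
  cComp (cPrec (cProj 0) (cComp code_pred [cProj 1])) [cProj 1; cProj 0].
Definition code_mul : code := cPrec cZero (cComp code_add [cProj 1; cProj 2]).
Definition code_iter (f : code) : code := cPrec (cProj 0) (cComp f [cProj 1]).
Definition code_if : code := cPrec (cProj 0) (cProj 3).
Definition code_pow2 : code := cPrec (code_num 1) (cComp code_add [cProj 1; cProj 1]).

Lemma eval_code_num n v : eval (code_num n) v n.
Proof. induction n; simpl; [constructor | eapply eval_comp1; [eauto | constructor]]. Qed.

Lemma eval_code_pred a w : eval code_pred (a :: w) (pred a).
Proof.
  induction a; [repeat constructor|].
  econstructor; [exact IHa | apply (eval_proj 0 (a :: _ :: w)); simpl; lia].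
Qed.

Lemma eval_code_add a b w : eval code_add (a :: b :: w) (a + b).
Proof.
  induction a; [constructor; solve_eval_proj|].
  econstructor; [eauto | eapply eval_comp1; [solve_eval_proj | constructor]].
Qed.

Lemma eval_code_sub a b w : eval code_sub (a :: b :: w) (a - b).
Proof.
  eapply eval_comp2; [solve_eval_proj | solve_eval_proj |]; simpl.
  induction b as [|b IH].
  - rewrite Nat.sub_0_r; constructor; solve_eval_proj.
  - econstructor; [exact IH|]. eapply eval_comp1; [solve_eval_proj|].
    replace (a - S b) with (pred (a - b)) by lia; apply eval_code_pred.
Qed.

Lemma eval_code_mul a b w : eval code_mul (a :: b :: w) (a * b).
Proof.
  induction a; [repeat constructor|].
  econstructor; [eauto | eapply eval_comp2; [solve_eval_proj | solve_eval_proj |]]; simpl.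
  replace (b + a * b) with (a * b + b) by lia; apply eval_code_add.
Qed.

Lemma eval_code_iter f F n x w :
  (forall r, eval f [r] (F r)) -> eval (code_iter f) (n :: x :: w) (Nat.iter n F x).
Proof.
  intro Hf; induction n; [constructor; solve_eval_proj|].
  econstructor; [eauto | eapply eval_comp1; [solve_eval_proj | apply Hf]].
Qed.

Lemma eval_code_if a b c : eval code_if [a; b; c] (match a with 0 => b | S _ => c end).
Proof.
  induction a; [constructor; solve_eval_proj|].
  econstructor; [exact IHa | solve_eval_proj].
Qed.

Lemma eval_code_pow2 a : eval code_pow2 [a] (2 ^ a).
Proof.
  induction a; [constructor; apply eval_code_num|].
  econstructor; [eauto | eapply eval_comp2; [solve_eval_proj | solve_eval_proj |]]; simpl.
  replace (2 ^ a + (2 ^ a + 0)) with (2 ^ a + 2 ^ a) by lia; apply eval_code_add.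
Qed.

Fixpoint tri (n : nat) : nat := match n with 0 => 0 | S m => tri m + S m end.

Fixpoint tri_root (z : nat) : nat :=
  match z with
  | 0 => 0
  | S z' => let w := tri_root z' in if S z' <? tri (S w) then w else S w
  end.

Lemma tri_mono a b : a <= b -> tri a <= tri b.
Proof. induction 1; simpl; lia. Qed.

Lemma tri_root_spec z : tri (tri_root z) <= z < tri (S (tri_root z)).
Proof.
  induction z; [simpl; lia|]. cbn [tri_root].
  destruct (S z <? tri (S (tri_root z))) eqn:E;
    [apply Nat.ltb_lt in E | apply Nat.ltb_ge in E]; cbn [tri] in *; lia.
Qed.

Lemma tri_root_unique w z : tri w <= z < tri (S w) -> tri_root z = w.
Proof.
  intro Hw. pose proof (tri_root_spec z).
  destruct (Nat.lt_trichotomy (tri_root z) w) as [L | [E | L]]; auto.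
  - pose proof (tri_mono (S (tri_root z)) w L). lia.
  - pose proof (tri_mono (S w) (tri_root z) L). lia.
Qed.

Definition cpair (a b : nat) : nat := tri (a + b) + b.
Definition csnd (z : nat) : nat := z - tri (tri_root z).
Definition cfst (z : nat) : nat := tri_root z - csnd z.

Lemma tri_root_cpair a b : tri_root (cpair a b) = a + b.
Proof. apply tri_root_unique. unfold cpair; cbn [tri]; lia. Qed.

Lemma csnd_cpair a b : csnd (cpair a b) = b.
Proof. unfold csnd. rewrite tri_root_cpair. unfold cpair. lia. Qed.

Lemma cfst_cpair a b : cfst (cpair a b) = a.
Proof. unfold cfst. rewrite csnd_cpair, tri_root_cpair. lia. Qed.

Lemma cpair_surj z : cpair (cfst z) (csnd z) = z.
Proof.
  pose proof (tri_root_spec z). unfold cfst, csnd, cpair. cbn [tri] in *.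
  replace (tri_root z - (z - tri (tri_root z)) + (z - tri (tri_root z))) with (tri_root z)
    by lia.
  lia.
Qed.

Definition code_tri : code :=
  cPrec cZero (cComp code_add [cProj 1; cComp cSucc [cProj 0]]).

(* Searches for the least [m] with [z < tri (m + 1)]. *)
Definition code_tri_root : code :=
  cMin (cComp code_sub [cComp cSucc [cProj 1]; cComp code_tri [cComp cSucc [cProj 0]]]).

Definition code_csnd : code := cComp code_sub [cProj 0; cComp code_tri [code_tri_root]].
Definition code_cfst : code := cComp code_sub [code_tri_root; code_csnd].
Definition code_cpair : code :=
  cComp code_add [cComp code_tri [code_add]; cProj 1].

Lemma eval_code_tri a w : eval code_tri (a :: w) (tri a).
Proof.
  induction a; [repeat constructor|].
  econstructor; [eauto|]. eapply eval_comp2; [solve_eval_proj | |].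
  - eapply eval_comp1; [solve_eval_proj | constructor].
  - apply eval_code_add.
Qed.

Lemma eval_code_tri_root z w : eval code_tri_root (z :: w) (tri_root z).
Proof.
  assert (G : forall m, eval (cComp code_sub [cComp cSucc [cProj 1];
                                             cComp code_tri [cComp cSucc [cProj 0]]])
                             (m :: z :: w) (S z - tri (S m))).
  { intro m. eapply eval_comp2; [| |apply eval_code_sub].
    - eapply eval_comp1; [solve_eval_proj | constructor].
    - eapply eval_comp1; [| apply eval_code_tri].
      eapply eval_comp1; [solve_eval_proj | constructor]. }
  pose proof (tri_root_spec z). constructor.
  - pose proof (G (tri_root z)) as G0.
    replace (S z - tri (S (tri_root z))) with 0 in G0 by lia. exact G0.
  - intros m Hm. exists (z - tri (S m)).
    pose proof (tri_mono (S m) (tri_root z) Hm).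
    replace (S (z - tri (S m))) with (S z - tri (S m)) by lia. apply G.
Qed.

Lemma eval_code_csnd z : eval code_csnd [z] (csnd z).
Proof.
  eapply eval_comp2; [solve_eval_proj | | apply eval_code_sub].
  eapply eval_comp1; [apply eval_code_tri_root | apply eval_code_tri].
Qed.

Lemma eval_code_cfst z : eval code_cfst [z] (cfst z).
Proof.
  eapply eval_comp2; [apply eval_code_tri_root | apply eval_code_csnd | apply eval_code_sub].
Qed.

Lemma eval_code_cpair a b : eval code_cpair [a; b] (cpair a b).
Proof.
  eapply eval_comp2; [| solve_eval_proj | apply eval_code_add].
  eapply eval_comp1; [apply eval_code_add | apply eval_code_tri].
Qed.

Inductive expr : Type :=
| EVar (i : nat)
| ENum (n : nat)
| ESucc (e : expr)
| EPred (e : expr)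
| EAdd (e1 e2 : expr)
| ESub (e1 e2 : expr)
| EFst (e : expr)
| ESnd (e : expr)
| EPair (e1 e2 : expr)
| EIf (a b c : expr)
| EPow2 (e : expr)
| EIter (f n x : expr).


Fixpoint eden (e : expr) (v : list nat) : nat :=
  match e with
  | EVar i => nth i v 0
  | ENum n => n
  | ESucc a => S (eden a v)
  | EPred a => pred (eden a v)
  | EAdd a b => eden a v + eden b v
  | ESub a b => eden a v - eden b v
  | EFst a => cfst (eden a v)
  | ESnd a => csnd (eden a v)
  | EPair a b => cpair (eden a v) (eden b v)
  | EIf a b c => match eden a v with 0 => eden b v | S _ => eden c v end
  | EPow2 a => 2 ^ eden a v
  | EIter f n x => Nat.iter (eden n v) (fun r => eden f [r]) (eden x v)
  end.

Fixpoint expr_ok (e : expr) (n : nat) : Prop :=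
  match e with
  | EVar i => i < n
  | ENum _ => True
  | ESucc a | EPred a | EFst a | ESnd a | EPow2 a => expr_ok a n
  | EAdd a b | ESub a b | EPair a b => expr_ok a n /\ expr_ok b n
  | EIf a b c => expr_ok a n /\ expr_ok b n /\ expr_ok c n
  | EIter f m x => expr_ok f 1 /\ expr_ok m n /\ expr_ok x n
  end.

Fixpoint compile (e : expr) : code :=
  match e with
  | EVar i => cProj i
  | ENum n => code_num n
  | ESucc a => cComp cSucc [compile a]
  | EPred a => cComp code_pred [compile a]
  | EAdd a b => cComp code_add [compile a; compile b]
  | ESub a b => cComp code_sub [compile a; compile b]
  | EFst a => cComp code_cfst [compile a]
  | ESnd a => cComp code_csnd [compile a]
  | EPair a b => cComp code_cpair [compile a; compile b]
  | EIf a b c => cComp code_if [compile a; compile b; compile c]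
  | EPow2 a => cComp code_pow2 [compile a]
  | EIter f n x => cComp (code_iter (compile f)) [compile n; compile x]
  end.

Lemma eval_compile e : forall v, expr_ok e (length v) -> eval (compile e) v (eden e v).
Proof.
  induction e; simpl; intros v H.
  - now constructor.
  - apply eval_code_num.
  - eapply eval_comp1; [eauto | constructor].
  - eapply eval_comp1; [eauto | apply eval_code_pred].
  - eapply eval_comp2; [apply IHe1 | apply IHe2 | apply eval_code_add]; tauto.
  - eapply eval_comp2; [apply IHe1 | apply IHe2 | apply eval_code_sub]; tauto.
  - eapply eval_comp1; [eauto | apply eval_code_cfst].
  - eapply eval_comp1; [eauto | apply eval_code_csnd].
  - eapply eval_comp2; [apply IHe1 | apply IHe2 | apply eval_code_cpair]; tauto.
  - eapply eval_comp3; [apply IHe1 | apply IHe2 | apply IHe3 | apply eval_code_if]; tauto.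
  - eapply eval_comp1; [eauto | apply eval_code_pow2].
  - destruct H as (Hf & Hn & Hx).
    eapply eval_comp2; [apply IHe2; exact Hn | apply IHe3; exact Hx |].
    apply eval_code_iter. intro r. apply (IHe1 [r]). exact Hf.
Qed.

Lemma recursive2_expr e : expr_ok e 2 -> recursive2 (fun n k => eden e [n; k]).
Proof. intro H. exists (compile e). intros n k. now apply (eval_compile e [n; k]). Qed.

Lemma recursive2_comp h f g :
  recursive2 h -> recursive2 f -> recursive2 g -> recursive2 (fun n k => h (f n k) (g n k)).
Proof.
  intros [ch Hh] [cf Hf] [cg Hg]. exists (cComp ch [cf; cg]).
  intros n k. eapply eval_comp2; eauto.
Qed.

Lemma recursive2_fst : recursive2 (fun n _ => n).
Proof. exists (cProj 0). intros n k. apply (eval_proj 0 [n; k]); simpl; lia. Qed.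

Lemma recursive2_snd : recursive2 (fun _ k => k).
Proof. exists (cProj 1). intros n k. apply (eval_proj 1 [n; k]); simpl; lia. Qed.

Lemma recursive2_const m : recursive2 (fun _ _ => m).
Proof. exists (code_num m). intros; apply eval_code_num. Qed.

Lemma recursive2_add : recursive2 Nat.add.
Proof. exists code_add. intros; apply eval_code_add. Qed.

Lemma recursive2_sub : recursive2 Nat.sub.
Proof. exists code_sub. intros; apply eval_code_sub. Qed.

Lemma recursive2_mul : recursive2 Nat.mul.
Proof. exists code_mul. intros; apply eval_code_mul. Qed.

Lemma recursive2_comp1 h f : recursive1 h -> recursive2 f -> recursive2 (fun n k => h (f n k)).
Proof.
  intros [ch Hh] [cf Hf]. exists (cComp ch [cf]). intros n k. eapply eval_comp1; eauto.
Qed.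

Lemma recursive1_diagonal g : recursive2 g -> recursive1 (fun n => g n n).
Proof.
  intros [c Hc]. exists (cComp c [cProj 0; cProj 0]). intro n.
  eapply eval_comp2; [apply (eval_proj 0 [n]) | apply (eval_proj 0 [n]) | apply Hc]; simpl; lia.
Qed.

Ltac solve_recursive2 :=
  repeat match goal with
  | H : recursive2 ?h |- recursive2 ?h => exact H
  | |- recursive2 (fun n _ => n) => exact recursive2_fst
  | |- recursive2 (fun _ k => k) => exact recursive2_snd
  | |- recursive2 (fun _ _ => ?m) => exact (recursive2_const m)
  | |- recursive2 (fun n k => S (@?f n k)) =>
      apply (recursive2_comp Nat.add (fun _ _ => 1) f recursive2_add)
  | |- recursive2 (fun n k => @?f n k + @?g n k) =>
      apply (recursive2_comp Nat.add f g recursive2_add)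
  | |- recursive2 (fun n k => @?f n k - @?g n k) =>
      apply (recursive2_comp Nat.sub f g recursive2_sub)
  | |- recursive2 (fun n k => @?f n k * @?g n k) =>
      apply (recursive2_comp Nat.mul f g recursive2_mul)
  | H : recursive1 ?h |- recursive2 (fun n k => ?h (@?f n k)) => apply (recursive2_comp1 h f H)
  | H : recursive2 ?h |- recursive2 (fun n k => ?h (@?f n k) (@?g n k)) =>
      apply (recursive2_comp h f g H)
  end.

(** * An abstract machine for mu-recursive codes *)

Inductive frame : Type :=
| FComp (f : code) (rest : list code) (v acc : list nat)
| FPrec (g : code) (n : nat) (v : list nat)
| FMin (f : code) (m : nat) (v : list nat).

Inductive state : Type :=
| Call (c : code) (v : list nat) (K : list frame)
| Ret (y : nat) (K : list frame).

(* [FComp f rest v acc] collects in [acc] the values of the arguments of a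
   composition, from right to left. *)
Definition step (s : state) : state :=
  match s with
  | Call cZero v K => Ret 0 K
  | Call cSucc (x :: _) K => Ret (S x) K
  | Call cSucc [] K => s
  | Call (cProj i) v K => if i <? length v then Ret (nth i v 0) K else s
  | Call (cComp f gs) v K =>
      match rev gs with
      | [] => Call f [] K
      | g :: rest => Call g v (FComp f rest v [] :: K)
      end
  | Call (cPrec f g) (0 :: v) K => Call f v K
  | Call (cPrec f g) (S n :: v) K => Call (cPrec f g) (n :: v) (FPrec g n v :: K)
  | Call (cPrec f g) [] K => s
  | Call (cMin f) v K => Call f (0 :: v) (FMin f 0 v :: K)
  | Ret y [] => s
  | Ret y (FComp f rest v acc :: K) =>
      match rest with
      | [] => Call f (y :: acc) K
      | g :: rest' => Call g v (FComp f rest' v (y :: acc) :: K)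
      end
  | Ret r (FPrec g n v :: K) => Call g (n :: r :: v) K
  | Ret y (FMin f m v :: K) =>
      match y with
      | 0 => Ret m K
      | S _ => Call f (S m :: v) (FMin f (S m) v :: K)
      end
  end.

Definition run (n : nat) (s : state) : state := Nat.iter n step s.

Definition reaches (s t : state) : Prop := exists n, run n s = t.

Lemma reaches_step s : reaches s (step s).
Proof. now exists 1. Qed.

Lemma reaches_trans s t u : reaches s t -> reaches t u -> reaches s u.
Proof.
  intros [a Ha] [b Hb]. exists (b + a). unfold run in *.
  now rewrite Nat.iter_add, Ha.
Qed.

Lemma reaches_step_trans s t : reaches (step s) t -> reaches s t.
Proof. apply reaches_trans, reaches_step. Qed.

Definition computes (v : list nat) (g : code) (y : nat) : Prop :=
  forall K, reaches (Call g v K) (Ret y K).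

Lemma reaches_comp_args v f g gs ys acc K :
  Forall2 (computes v) (g :: gs) ys ->
  reaches (Call g v (FComp f gs v acc :: K)) (Call f (rev ys ++ acc) K).
Proof.
  revert g ys acc. induction gs as [|g' gs IH]; intros g ys acc H;
    inversion H as [|? y ? ys' Hg Hgs]; subst.
  - inversion Hgs; subst. eapply reaches_trans; [apply Hg|]. apply reaches_step.
  - eapply reaches_trans; [apply Hg|]. apply reaches_step_trans.
    simpl. rewrite <- app_assoc. now apply IH.
Qed.

Lemma reaches_min f v n K :
  computes (n :: v) f 0 ->
  (forall m, m < n -> exists k, computes (m :: v) f (S k)) ->
  forall j, j <= n -> reaches (Call f (j :: v) (FMin f j v :: K)) (Ret n K).
Proof.
  intros Hn Hlt j Hj. remember (n - j) as d eqn:Hd. revert j Hj Hd.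
  induction d as [|d IH]; intros j Hj Hd.
  - replace j with n by lia. eapply reaches_trans; [apply Hn|]. apply reaches_step.
  - destruct (Hlt j ltac:(lia)) as [k Hk]. eapply reaches_trans; [apply Hk|].
    apply reaches_step_trans. apply IH; lia.
Qed.

Lemma Forall2_rev {A B} (P : A -> B -> Prop) l m :
  Forall2 P l m -> Forall2 P (rev l) (rev m).
Proof. induction 1; simpl; [constructor | apply Forall2_app; auto]. Qed.

Lemma eval_reaches : forall c v y, eval c v y -> computes v c y
with evals_reaches : forall gs v ys, evals gs v ys -> Forall2 (computes v) gs ys.
Proof.
  - intros c v y H. destruct H; intro K.
    + apply reaches_step.
    + apply reaches_step.
    + apply Nat.ltb_lt in H. exists 1. simpl. now rewrite H.
    + pose proof (eval_reaches _ _ _ H0) as Hf.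
      apply evals_reaches, Forall2_rev in H.
      apply reaches_step_trans. simpl. destruct (rev gs) as [|g rest] eqn:E.
      * apply Forall2_length in H. rewrite length_rev in H.
        destruct ys; [apply Hf | discriminate].
      * pose proof (reaches_comp_args v f g rest (rev ys) [] K H) as Hargs.
        rewrite rev_involutive, app_nil_r in Hargs. eapply reaches_trans; [apply Hargs | apply Hf].
    + apply reaches_step_trans. exact (eval_reaches _ _ _ H K).
    + apply reaches_step_trans. eapply reaches_trans; [exact (eval_reaches _ _ _ H _)|].
      apply reaches_step_trans. exact (eval_reaches _ _ _ H0 K).
    + apply reaches_step_trans. apply reaches_min; [exact (eval_reaches _ _ _ H) | | lia].
      intros m Hm. destruct (H0 m Hm) as [k Hk]. exists k. exact (eval_reaches _ _ _ Hk).
  - intros gs v ys H. destruct H; constructor; [now apply eval_reaches | now apply evals_reaches].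
Qed.

(** * Arithmetisation of the machine *)

Fixpoint enc_list (l : list nat) : nat :=
  match l with [] => 0 | x :: l' => S (cpair x (enc_list l')) end.

(* The arguments of a composition are stored in reverse order, the order in
   which the machine evaluates them. *)
Fixpoint enc_code (c : code) : nat :=
  match c with
  | cZero => cpair 0 0
  | cSucc => cpair 1 0
  | cProj i => cpair 2 i
  | cComp f gs => cpair 3 (cpair (enc_code f) (enc_list (rev (map enc_code gs))))
  | cPrec f g => cpair 4 (cpair (enc_code f) (enc_code g))
  | cMin f => cpair 5 (enc_code f)
  end.

Lemma enc_code_comp f gs :
  enc_code (cComp f gs) = cpair 3 (cpair (enc_code f) (enc_list (map enc_code (rev gs)))).
Proof. simpl. now rewrite map_rev. Qed.

Definition enc_frame (fr : frame) : nat :=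
  match fr with
  | FComp f rest v acc =>
      cpair 0 (cpair (enc_code f)
                 (cpair (enc_list (map enc_code rest)) (cpair (enc_list v) (enc_list acc))))
  | FPrec g n v => cpair 1 (cpair (enc_code g) (cpair n (enc_list v)))
  | FMin f m v => cpair 2 (cpair (enc_code f) (cpair m (enc_list v)))
  end.

Definition enc_stack (K : list frame) : nat := enc_list (map enc_frame K).

Definition enc_state (s : state) : nat :=
  match s with
  | Call c v K => cpair 0 (cpair (enc_code c) (cpair (enc_list v) (enc_stack K)))
  | Ret y K => cpair 1 (cpair y (enc_stack K))
  end.

Definition EHd (l : expr) : expr := EFst (EPred l).
Definition ETl (l : expr) : expr := ESnd (EPred l).
Definition ECons (x l : expr) : expr := ESucc (EPair x l).
Definition ECall (c v K : expr) : expr := EPair (ENum 0) (EPair c (EPair v K)).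
Definition ERet (y K : expr) : expr := EPair (ENum 1) (EPair y K).
Definition EFComp (f rest v acc : expr) : expr :=
  EPair (ENum 0) (EPair f (EPair rest (EPair v acc))).
Definition EFPrec (g n v : expr) : expr := EPair (ENum 1) (EPair g (EPair n v)).
Definition EFMin (f m v : expr) : expr := EPair (ENum 2) (EPair f (EPair m v)).

(* Tags are dispatched by [EIf (ESub tag (ENum i))], which is the [tag = i]
   branch once the smaller tags have been excluded.  [s] is the whole state,
   returned unchanged by stuck states. *)
Definition step_call_expr (s c v K : expr) : expr :=
  let tag := EFst c in let arg := ESnd c in
  EIf tag (ERet (ENum 0) K)
  (EIf (ESub tag (ENum 1)) (EIf v s (ERet (ESucc (EHd v)) K))
  (EIf (ESub tag (ENum 2))
     (let suffix := EIter (ETl (EVar 0)) arg v in EIf suffix s (ERet (EHd suffix) K))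
  (EIf (ESub tag (ENum 3))
     (let f := EFst arg in let gs := ESnd arg in
      EIf gs (ECall f (ENum 0) K)
             (ECall (EHd gs) v (ECons (EFComp f (ETl gs) v (ENum 0)) K)))
  (EIf (ESub tag (ENum 4))
     (let f := EFst arg in let g := ESnd arg in
      EIf v s
        (let n := EHd v in let w := ETl v in
         EIf n (ECall f w K) (ECall c (ECons (EPred n) w) (ECons (EFPrec g (EPred n) w) K))))
  (ECall arg (ECons (ENum 0) v) (ECons (EFMin arg (ENum 0) v) K)))))).

Definition step_ret_expr (s y K : expr) : expr :=
  EIf K s
  (let fr := EHd K in let K' := ETl K in let tag := EFst fr in let data := ESnd fr in
   EIf tag
     (let f := EFst data in let rest := EFst (ESnd data) in
      let v := EFst (ESnd (ESnd data)) in let acc := ESnd (ESnd (ESnd data)) in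
      EIf rest (ECall f (ECons y acc) K')
        (ECall (EHd rest) v (ECons (EFComp f (ETl rest) v (ECons y acc)) K')))
   (EIf (ESub tag (ENum 1))
     (let g := EFst data in let n := EFst (ESnd data) in let w := ESnd (ESnd data) in
      ECall g (ECons n (ECons y w)) K')
     (let f := EFst data in let m := EFst (ESnd data) in let v := ESnd (ESnd data) in
      EIf y (ERet m K') (ECall f (ECons (ESucc m) v) (ECons (EFMin f (ESucc m) v) K'))))).

Definition step_expr : expr :=
  let s := EVar 0 in let body := ESnd s in
  EIf (EFst s)
    (step_call_expr s (EFst body) (EFst (ESnd body)) (ESnd (ESnd body)))
    (step_ret_expr s (EFst body) (ESnd body)).

Definition step_num (z : nat) : nat := eden step_expr [z].

Lemma enc_list_skipn i v :
  Nat.iter i (fun r => csnd (pred r)) (enc_list v) = enc_list (skipn i v).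
Proof.
  revert v. induction i; intros v; [reflexivity|].
  rewrite Nat.iter_succ_r. destruct v; simpl.
  - clear IHi. induction i; simpl; [reflexivity|]. rewrite IHi. reflexivity.
  - rewrite csnd_cpair. apply IHi.
Qed.

Lemma skipn_nil_iff i (v : list nat) : skipn i v = [] <-> length v <= i.
Proof.
  split; [|apply skipn_all2].
  intro H. apply (f_equal (@length nat)) in H. rewrite length_skipn in H. simpl in H; lia.
Qed.

Lemma nth_skipn_cons i (v : list nat) x l : skipn i v = x :: l -> nth i v 0 = x.
Proof.
  revert v; induction i; intros v H; destruct v; simpl in *; try discriminate; eauto.
  congruence.
Qed.

Ltac simpl_pairs :=
  repeat (rewrite ?cfst_cpair, ?csnd_cpair; cbn [Nat.pred Nat.sub enc_list enc_stack map]).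

Lemma step_num_enc s : step_num (enc_state s) = enc_state (step s).
Proof.
  unfold step_num, step_expr, step_call_expr, step_ret_expr,
    EHd, ETl, ECons, ECall, ERet, EFComp, EFPrec, EFMin.
  destruct s as [c v K | y K].
  - destruct c as [| | i | f gs | f g | f]; cbn [enc_state];
      try rewrite enc_code_comp; cbn [enc_code eden nth]; simpl_pairs.
    + reflexivity.
    + destruct v; simpl_pairs; reflexivity.
    + rewrite enc_list_skipn. unfold step. destruct (i <? length v) eqn:E.
      * apply Nat.ltb_lt in E. destruct (skipn i v) eqn:E2.
        { apply skipn_nil_iff in E2. lia. }
        simpl_pairs. now rewrite (nth_skipn_cons _ _ _ _ E2).
      * apply Nat.ltb_ge, skipn_nil_iff in E. now rewrite E.
    + unfold step. destruct (rev gs); simpl_pairs; reflexivity.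
    + destruct v as [| [|n] w]; simpl_pairs; reflexivity.
    + reflexivity.
  - destruct K as [| fr K]; cbn [enc_state enc_stack map enc_list eden nth]; simpl_pairs;
      [reflexivity|].
    destruct fr as [f rest v acc | g n v | f m v]; cbn [enc_frame]; simpl_pairs.
    + destruct rest; simpl_pairs; reflexivity.
    + reflexivity.
    + destruct y; reflexivity.
Qed.

Definition halt_expr (s : expr) : expr :=
  EAdd (EAdd (ESub (EFst s) (ENum 1)) (ESub (ENum 1) (EFst s))) (ESnd (ESnd s)).

Definition halt_num (z : nat) : nat := eden (halt_expr (EVar 0)) [z].

Lemma halt_num_zero z : halt_num z = 0 -> z = enc_state (Ret (cfst (csnd z)) []).
Proof.
  unfold halt_num, halt_expr; cbn [eden nth]. intro H.
  rewrite <- (cpair_surj z), <- (cpair_surj (csnd z)) at 1.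
  cbn [enc_state enc_stack map enc_list]. f_equal; [lia|]. f_equal. lia.
Qed.

Lemma halt_num_ret y : halt_num (enc_state (Ret y [])) = 0.
Proof. unfold halt_num, halt_expr; cbn [eden nth enc_state enc_stack map]. now simpl_pairs. Qed.

Lemma step_num_halted z : halt_num z = 0 -> step_num z = z.
Proof. intro H. apply halt_num_zero in H. now rewrite H, step_num_enc. Qed.

Definition run_num (j z : nat) : nat := Nat.iter j step_num z.

Lemma run_num_enc j s : run_num j (enc_state s) = enc_state (run j s).
Proof.
  induction j; [reflexivity|]. unfold run_num, run in *.
  now rewrite !Nat.iter_succ, IHj, step_num_enc.
Qed.

Lemma run_num_halted z i j :
  i <= j -> halt_num (run_num i z) = 0 -> run_num j z = run_num i z.
Proof.
  intros Hij Hh. induction Hij; [reflexivity|].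
  unfold run_num in *. rewrite Nat.iter_succ, IHHij. now apply step_num_halted.
Qed.

(* One step on [cpair t z], where [t] counts the steps taken before halting. *)
Definition clock_expr : expr :=
  let p := EVar 0 in
  EIf (halt_expr (ESnd p)) p (EPair (ESucc (EFst p)) (EIter step_expr (ENum 1) (ESnd p))).

Definition clock_num (p : nat) : nat := eden clock_expr [p].

Definition run_clocked (j z : nat) : nat := Nat.iter j clock_num (cpair 0 z).

Lemma clock_num_pair t z :
  clock_num (cpair t z) =
  match halt_num z with 0 => cpair t z | S _ => cpair (S t) (step_num z) end.
Proof.
  unfold clock_num, clock_expr, halt_num, halt_expr, step_num. cbn [eden nth Nat.iter].
  now rewrite cfst_cpair, !csnd_cpair.
Qed.

Lemma run_clocked_running z j :
  (forall i, i < j -> halt_num (run_num i z) <> 0) -> run_clocked j z = cpair j (run_num j z).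
Proof.
  induction j; intros H; [reflexivity|].
  unfold run_clocked in *. rewrite Nat.iter_succ, IHj by (intros; apply H; lia).
  rewrite clock_num_pair. destruct (halt_num (run_num j z)) eqn:E.
  - exfalso. exact (H j (Nat.lt_succ_diag_r j) E).
  - unfold run_num. now rewrite Nat.iter_succ.
Qed.

Lemma run_clocked_halted z h j :
  (forall i, i < h -> halt_num (run_num i z) <> 0) -> halt_num (run_num h z) = 0 ->
  h <= j -> run_clocked j z = cpair h (run_num h z).
Proof.
  intros Hbefore Hh. induction 1; [now apply run_clocked_running|].
  unfold run_clocked in *. now rewrite Nat.iter_succ, IHle, clock_num_pair, Hh.
Qed.

Definition init_num (n : nat) : nat := cpair 0 (cpair n (cpair (S (cpair n 0)) 0)).

Lemma init_num_enc c : init_num (enc_code c) = enc_state (Call c [enc_code c] []).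
Proof. reflexivity. Qed.

Definition halts_at (n h : nat) : Prop := halt_num (run_num h (init_num n)) = 0.

Definition first_halt (n h : nat) : Prop := halts_at n h /\ forall i, i < h -> ~ halts_at n i.

Lemma first_halt_exists n h : halts_at n h -> exists h', first_halt n h'.
Proof.
  induction h as [h IH] using (well_founded_induction lt_wf). intro Hh.
  destruct (classic (exists i, i < h /\ halts_at n i)) as [(i & Hi & Hni) | Hnone].
  - exact (IH i Hi Hni).
  - exists h. split; [exact Hh|]. intros i Hi Hni. apply Hnone. eauto.
Qed.

Lemma first_halt_pos n h : first_halt n h -> 1 <= h.
Proof.
  intros [Hh _]. destruct h; [|lia].
  unfold halts_at in Hh. change (run_num 0 (init_num n)) with (init_num n) in Hh.
  unfold halt_num, halt_expr, init_num in Hh. cbn [eden nth] in Hh.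
  rewrite cfst_cpair in Hh. simpl in Hh. lia.
Qed.

Lemma first_halt_le n h k : first_halt n h -> halts_at n k -> h <= k.
Proof.
  intros [_ Hbefore] Hk. destruct (Nat.le_gt_cases h k); [lia|]. now exfalso; apply (Hbefore k).
Qed.

Definition clocked_expr : expr :=
  EIter clock_expr (EVar 1) (EPair (ENum 0) (ECall (EVar 0) (ECons (EVar 0) (ENum 0)) (ENum 0))).

Lemma eden_clocked_expr n k : eden clocked_expr [n; k] = run_clocked k (init_num n).
Proof. reflexivity. Qed.

(* Stage [k] at [n] is the rational [(a - b) / (c + 1)] with [a], [b], [c]
   given by [stage_a], [stage_b], [stage_c]: [0] until program [n] has halted
   on input [n], then [+/- / 2 ^ h] according to whether its output is [0],
   where [h] is the halting time. *)
Definition stage_expr (pos neg : expr) : expr :=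
  EIf (halt_expr (ESnd clocked_expr)) (EIf (EFst (ESnd (ESnd clocked_expr))) pos neg) (ENum 0).

Definition stage_a : expr := stage_expr (ENum 1) (ENum 0).
Definition stage_b : expr := stage_expr (ENum 0) (ENum 1).
Definition stage_c : expr :=
  EIf (halt_expr (ESnd clocked_expr)) (EPred (EPow2 (EFst clocked_expr))) (ENum 0).

Open Scope R_scope.

(** * Computable sequences of reals *)

Lemma Rabs_le_between x a : Rabs x <= a -> - a <= x <= a.
Proof.
  intro H. pose proof (Rle_abs x). pose proof (Rle_abs (- x)). rewrite Rabs_Ropp in *. lra.
Qed.

Lemma inv_pow2_pos k : 0 < / 2 ^ k.
Proof. apply Rinv_0_lt_compat, pow_lt; lra. Qed.

Lemma inv_pow2_le k l : (k <= l)%nat -> / 2 ^ l <= / 2 ^ k.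
Proof. intro H. apply Rinv_le_contravar; [apply pow_lt; lra | apply Rle_pow; [lra | exact H]]. Qed.

Lemma inv_pow2_add k l : / 2 ^ (k + l) = / 2 ^ k * / 2 ^ l.
Proof. now rewrite pow_add, Rinv_mult. Qed.

Lemma exists_pow2_gt r : exists B, r < 2 ^ B.
Proof.
  destruct (INR_archimed 1 r ltac:(lra)) as [n Hn]. exists n.
  replace 2 with (INR 2) by reflexivity. rewrite <- pow_INR.
  apply (Rlt_le_trans _ (INR n)); [lra|]. apply le_INR, Nat.lt_le_incl, Nat.pow_gt_lin_r. lia.
Qed.

Lemma exists_inv_pow2_lt r : 0 < r -> exists M, / 2 ^ M < r.
Proof.
  intro Hr. destruct (exists_pow2_gt (/ r)) as [M HM]. exists M.
  rewrite <- (Rinv_inv r). apply Rinv_lt_contravar; [|exact HM].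
  apply Rmult_lt_0_compat; [apply Rinv_0_lt_compat, Hr | apply pow_lt; lra].
Qed.

Lemma INR_S_pos c : 0 < INR (S c).
Proof. apply lt_0_INR. lia. Qed.

Lemma qval_add a1 b1 c1 a2 b2 c2 :
  qval (a1 * S c2 + a2 * S c1) (b1 * S c2 + b2 * S c1) (c1 * c2 + c1 + c2) =
  qval a1 b1 c1 + qval a2 b2 c2.
Proof.
  unfold qval. replace (S (c1 * c2 + c1 + c2)) with (S c1 * S c2)%nat by lia.
  rewrite !plus_INR, !mult_INR. pose proof (INR_S_pos c1). pose proof (INR_S_pos c2).
  field. lra.
Qed.

Lemma qval_mul a1 b1 c1 a2 b2 c2 :
  qval (a1 * a2 + b1 * b2) (a1 * b2 + b1 * a2) (c1 * c2 + c1 + c2) =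
  qval a1 b1 c1 * qval a2 b2 c2.
Proof.
  unfold qval. replace (S (c1 * c2 + c1 + c2)) with (S c1 * S c2)%nat by lia.
  rewrite !plus_INR, !mult_INR. pose proof (INR_S_pos c1). pose proof (INR_S_pos c2).
  field. lra.
Qed.

Lemma qval_opp a b c : qval b a c = - qval a b c.
Proof. unfold qval. pose proof (INR_S_pos c). field. lra. Qed.

Lemma qval_inv a b c : (b < a)%nat -> qval (S c) 0 (a - b - 1) = / qval a b c.
Proof.
  intro H. unfold qval. replace (S (a - b - 1)) with (a - b)%nat by lia.
  rewrite minus_INR by lia. pose proof (INR_S_pos c). apply lt_INR in H.
  simpl (INR 0). field. lra.
Qed.

Lemma qval_abs a b c : qval (a - b + (b - a)) 0 c = Rabs (qval a b c).
Proof.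
  unfold qval, Rdiv. pose proof (INR_S_pos c).
  rewrite Rabs_mult, (Rabs_pos_eq (/ _)) by (left; apply Rinv_0_lt_compat; lra).
  f_equal. rewrite plus_INR. simpl (INR 0). rewrite Rminus_0_r.
  destruct (Nat.le_gt_cases a b) as [Hab | Hab].
  - apply le_INR in Hab as Hab'. rewrite Rabs_left1 by lra.
    rewrite (proj2 (Nat.sub_0_le a b) Hab), minus_INR by lia. simpl. lra.
  - apply lt_INR in Hab as Hab'. rewrite Rabs_pos_eq by lra.
    rewrite (proj2 (Nat.sub_0_le b a) ltac:(lia)), minus_INR by lia. simpl. lra.
Qed.

Lemma qval_half a b c : qval a b (2 * c + 1) = qval a b c / 2.
Proof.
  unfold qval. replace (S (2 * c + 1)) with (2 * S c)%nat by lia.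
  rewrite mult_INR. pose proof (INR_S_pos c). simpl (INR 2). field. lra.
Qed.

Definition fast_computable (x : nat -> R) : Prop :=
  exists a b c : nat -> nat -> nat,
    recursive2 a /\ recursive2 b /\ recursive2 c /\
    forall n k, Rabs (qval (a n k) (b n k) (c n k) - x n) <= / 2 ^ k.

Lemma computable_seq_fast x : fast_computable x -> computable_seq x.
Proof.
  intros (a & b & c & Ha & Hb & Hc & H). exists a, b, c, (fun _ N => N).
  repeat split; try assumption; [solve_recursive2|].
  intros n N k Hk. eapply Rle_trans; [apply H | now apply inv_pow2_le].
Qed.

Lemma fast_computable_seq x : computable_seq x -> fast_computable x.
Proof.
  intros (a & b & c & e & Ha & Hb & Hc & He & H).
  exists (fun n k => a n (e n k)), (fun n k => b n (e n k)), (fun n k => c n (e n k)).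
  repeat split; try solve_recursive2.
  intros n k. apply H. lia.
Qed.

Lemma fast_computable_ext x y : fast_computable x -> (forall n, x n = y n) -> fast_computable y.
Proof.
  intros (a & b & c & Ha & Hb & Hc & H) E. exists a, b, c. repeat split; auto.
  intros n k. rewrite <- E. apply H.
Qed.

Lemma fast_computable_const d : computable_real d -> fast_computable (fun _ => d).
Proof.
  intros (a & b & c & e & Ha & Hb & Hc & He & H).
  exists (fun _ k => a (e k)), (fun _ k => b (e k)), (fun _ k => c (e k)).
  repeat split; try solve_recursive2.
  intros n k. apply H. lia.
Qed.

Lemma fast_computable_add x y :
  fast_computable x -> fast_computable y -> fast_computable (fun n => x n + y n).
Proof.
  intros (a1 & b1 & c1 & Ha1 & Hb1 & Hc1 & H1) (a2 & b2 & c2 & Ha2 & Hb2 & Hc2 & H2).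
  exists (fun n k => a1 n (S k) * S (c2 n (S k)) + a2 n (S k) * S (c1 n (S k)))%nat,
    (fun n k => b1 n (S k) * S (c2 n (S k)) + b2 n (S k) * S (c1 n (S k)))%nat,
    (fun n k => c1 n (S k) * c2 n (S k) + c1 n (S k) + c2 n (S k))%nat.
  repeat split; try solve_recursive2.
  intros n k. rewrite qval_add.
  specialize (H1 n (S k)). specialize (H2 n (S k)). simpl pow in H1, H2.
  rewrite Rinv_mult in H1, H2. pose proof (inv_pow2_pos k).
  set (q1 := qval (a1 n (S k)) _ _) in *. set (q2 := qval (a2 n (S k)) _ _) in *.
  replace (q1 + q2 - (x n + y n)) with ((q1 - x n) + (q2 - y n)) by ring.
  eapply Rle_trans; [apply Rabs_triang | lra].
Qed.

Lemma fast_computable_opp x : fast_computable x -> fast_computable (fun n => - x n).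
Proof.
  intros (a & b & c & Ha & Hb & Hc & H). exists b, a, c. repeat split; auto.
  intros n k. rewrite qval_opp, <- Rabs_Ropp. replace (- (- qval _ _ _ - - x n)) with
    (qval (a n k) (b n k) (c n k) - x n) by ring. apply H.
Qed.

Lemma fast_computable_abs x : fast_computable x -> fast_computable (fun n => Rabs (x n)).
Proof.
  intros (a & b & c & Ha & Hb & Hc & H).
  exists (fun n k => a n k - b n k + (b n k - a n k))%nat, (fun _ _ => 0%nat), c.
  repeat split; try solve_recursive2.
  intros n k. rewrite qval_abs. eapply Rle_trans; [apply Rabs_triang_inv2 | apply H].
Qed.

Lemma fast_computable_half x : fast_computable x -> fast_computable (fun n => x n / 2).
Proof.
  intros (a & b & c & Ha & Hb & Hc & H).
  exists a, b, (fun n k => 2 * c n k + 1)%nat. repeat split; try solve_recursive2.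
  intros n k. rewrite qval_half. specialize (H n k). pose proof (inv_pow2_pos k).
  replace (qval (a n k) (b n k) (c n k) / 2 - x n / 2)
    with ((qval (a n k) (b n k) (c n k) - x n) / 2) by field.
  unfold Rdiv. rewrite Rabs_mult, (Rabs_pos_eq (/ 2)) by lra. lra.
Qed.

Lemma Rmin_abs u v : Rmin u v = (u + v - Rabs (u - v)) / 2.
Proof. unfold Rmin, Rabs. destruct (Rle_dec u v), (Rcase_abs (u - v)); lra. Qed.

Lemma fast_computable_min x y :
  fast_computable x -> fast_computable y -> fast_computable (fun n => Rmin (x n) (y n)).
Proof.
  intros Hx Hy. apply (fast_computable_ext (fun n => (x n + y n + - Rabs (x n + - y n)) / 2)).
  - apply fast_computable_half, fast_computable_add, fast_computable_opp, fast_computable_abs;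
      [now apply fast_computable_add | now apply fast_computable_add, fast_computable_opp].
  - intro n. rewrite Rmin_abs. reflexivity.
Qed.

Definition seq_bounded (x : nat -> R) : Prop := exists b, forall n, Rabs (x n) <= b.

Lemma seq_bounded_pow2 x : seq_bounded x -> exists B, forall n, Rabs (x n) <= 2 ^ B.
Proof.
  intros [b Hb]. destruct (exists_pow2_gt b) as [B HB]. exists B. intro n.
  specialize (Hb n). lra.
Qed.

Lemma seq_bounded_const c : seq_bounded (fun _ => c).
Proof. now exists (Rabs c). Qed.

Lemma seq_bounded_add x y : seq_bounded x -> seq_bounded y -> seq_bounded (fun n => x n + y n).
Proof.
  intros [bx Hx] [by' Hy]. exists (bx + by'). intro n.
  eapply Rle_trans; [apply Rabs_triang | now apply Rplus_le_compat].
Qed.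

Lemma seq_bounded_opp x : seq_bounded x -> seq_bounded (fun n => - x n).
Proof. intros [b Hb]. exists b. intro n. now rewrite Rabs_Ropp. Qed.

Lemma fast_computable_mul x y : fast_computable x -> fast_computable y ->
  seq_bounded x -> seq_bounded y -> fast_computable (fun n => x n * y n).
Proof.
  intros (a1 & b1 & c1 & Ha1 & Hb1 & Hc1 & H1) (a2 & b2 & c2 & Ha2 & Hb2 & Hc2 & H2) Bx By.
  destruct (seq_bounded_pow2 _ Bx) as [B1 HB1]. destruct (seq_bounded_pow2 _ By) as [B2 HB2].
  set (B := (B1 + B2)%nat).
  (* At precision [k + B + 2], the error [|q1 - x| |q2| + |x| |q2 - y|] is below [/ 2 ^ k] *)
  exists (fun n k => a1 n (k + B + 2) * a2 n (k + B + 2) + b1 n (k + B + 2) * b2 n (k + B + 2))%nat,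
    (fun n k => a1 n (k + B + 2) * b2 n (k + B + 2) + b1 n (k + B + 2) * a2 n (k + B + 2))%nat,
    (fun n k => c1 n (k + B + 2) * c2 n (k + B + 2) + c1 n (k + B + 2) + c2 n (k + B + 2))%nat.
  repeat split; try solve_recursive2.
  intros n k. rewrite qval_mul.
  specialize (H1 n (k + B + 2)%nat). specialize (H2 n (k + B + 2)%nat).
  set (q1 := qval (a1 n _) _ _) in *. set (q2 := qval (a2 n _) _ _) in *.
  specialize (HB1 n). specialize (HB2 n).
  assert (Hp1 : 1 <= 2 ^ B1) by (apply pow_R1_Rle; lra).
  assert (Hp2 : 1 <= 2 ^ B2) by (apply pow_R1_Rle; lra).
  assert (Heps : / 2 ^ (k + B + 2) * (2 ^ B1 * 2 ^ B2) * 4 = / 2 ^ k).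
  { unfold B. rewrite !pow_add. simpl. field. repeat split; apply pow_nonzero; lra. }
  assert (Hsmall : / 2 ^ (k + B + 2) <= 1) by
    (rewrite <- Rinv_1; apply Rinv_le_contravar; [lra | apply pow_R1_Rle; lra]).
  assert (Hq2 : Rabs q2 <= 2 ^ B2 + 1).
  { replace q2 with ((q2 - y n) + y n) by ring. eapply Rle_trans; [apply Rabs_triang | lra]. }
  replace (q1 * q2 - x n * y n) with ((q1 - x n) * q2 + x n * (q2 - y n)) by ring.
  eapply Rle_trans; [apply Rabs_triang|]. rewrite !Rabs_mult.
  pose proof (inv_pow2_pos (k + B + 2)).
  assert (Rabs (q1 - x n) * Rabs q2 <= / 2 ^ (k + B + 2) * (2 ^ B2 + 1))
    by (apply Rmult_le_compat; auto using Rabs_pos).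
  assert (Rabs (x n) * Rabs (q2 - y n) <= 2 ^ B1 * / 2 ^ (k + B + 2))
    by (apply Rmult_le_compat; auto using Rabs_pos).
  assert (Hsum : 2 ^ B2 + 1 + 2 ^ B1 <= 2 ^ B1 * 2 ^ B2 * 4) by nra.
  apply (Rmult_le_compat_l (/ 2 ^ (k + B + 2))) in Hsum; [nra | lra].
Qed.

Lemma qval_gt_half a b c : 1 / 2 < qval a b c -> (2 * b + S c < 2 * a)%nat.
Proof.
  unfold qval. intro H. pose proof (INR_S_pos c).
  apply (Rmult_lt_compat_r (INR (S c))) in H; [|lra].
  replace ((INR a - INR b) / INR (S c) * INR (S c)) with (INR a - INR b) in H by (field; lra).
  apply INR_lt. rewrite !plus_INR, !mult_INR. simpl (INR 2). lra.
Qed.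

Lemma qval_le_half a b c : qval a b c < 1 / 2 -> (2 * a <= 2 * b + S c)%nat.
Proof.
  unfold qval. intro H. pose proof (INR_S_pos c).
  apply (Rmult_lt_compat_r (INR (S c))) in H; [|lra].
  replace ((INR a - INR b) / INR (S c) * INR (S c)) with (INR a - INR b) in H by (field; lra).
  apply INR_le. rewrite !plus_INR, !mult_INR. simpl (INR 2). lra.
Qed.

Lemma fast_computable_inv x : fast_computable x ->
  (exists r, 0 < r /\ forall n, r <= x n) -> fast_computable (fun n => / x n).
Proof.
  intros (a & b & c & Ha & Hb & Hc & H) (r & Hr & Hx).
  destruct (exists_inv_pow2_lt r Hr) as [M HM].
  exists (fun n k => S (c n (k + (M + M + 2))%nat)), (fun _ _ => 0%nat),
    (fun n k => a n (k + (M + M + 2)) - b n (k + (M + M + 2)) - 1)%nat.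
  repeat split; try solve_recursive2.
  intros n k. set (K := (k + (M + M + 2))%nat). specialize (H n K). specialize (Hx n).
  set (q := qval (a n K) (b n K) (c n K)) in *.
  (* [q >= e / 2] with [e = / 2 ^ M], so [|/ q - / x| = |x - q| / (q x) <= 2 |x - q| / e ^ 2]. *)
  pose proof (inv_pow2_pos k). pose proof (inv_pow2_pos M). set (e := / 2 ^ M) in *.
  assert (EK : / 2 ^ K = / 2 ^ k * e * e / 4).
  { unfold K, e. rewrite !inv_pow2_add. simpl. field; repeat split; apply pow_nonzero; lra. }
  assert (He1 : e <= 1) by (unfold e; rewrite <- Rinv_1; apply Rinv_le_contravar;
                            [lra | apply pow_R1_Rle; lra]).
  assert (Hk1 : / 2 ^ k <= 1) by (rewrite <- Rinv_1; apply Rinv_le_contravar;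
                                  [lra | apply pow_R1_Rle; lra]).
  assert (Hdist : Rabs (x n - q) <= / 2 ^ k * e * e / 4) by (now rewrite Rabs_minus_sym, <- EK).
  apply Rabs_le_between in Hdist.
  assert (/ 2 ^ k * e * e / 4 <= e / 4).
  { assert (/ 2 ^ k * e <= 1 * 1) by (apply Rmult_le_compat; lra).
    nra. }
  assert (Hq : e / 2 <= q) by lra.
  assert (Hab : (b n (K) < a n (K))%nat).
  { apply INR_lt. pose proof (INR_S_pos (c n K)).
    assert (INR (a n K) - INR (b n K) = q * INR (S (c n K)))
      by (unfold q, qval; field; lra).
    nra. }
  rewrite qval_inv by exact Hab. fold q.
  replace (/ q - / x n) with ((x n - q) / (q * x n)) by (field; lra).
  unfold Rdiv. rewrite Rabs_mult, Rabs_inv, (Rabs_pos_eq (q * x n)) by nra.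
  apply (Rle_trans _ (/ 2 ^ K * / (e * e / 2))).
  - apply Rmult_le_compat; [apply Rabs_pos | left; apply Rinv_0_lt_compat; nra | |].
    + rewrite Rabs_minus_sym. exact H.
    + apply Rinv_le_contravar; nra.
  - rewrite EK. assert (0 < 2 ^ k) by (apply pow_lt; lra).
    replace (/ 2 ^ k * e * e / 4 * / (e * e / 2)) with (/ 2 ^ k / 2) by (field; lra). lra.
Qed.

(** * The diagonal sequence *)

Definition stage (n k : nat) : R :=
  qval (eden stage_a [n; k]) (eden stage_b [n; k]) (eden stage_c [n; k]).

Definition sign_of (y : nat) : R := match y with 0%nat => 1 | S _ => -1 end.

Lemma qval_pow2 a b t : qval a b (pred (2 ^ t)) = (INR a - INR b) / 2 ^ t.
Proof.
  unfold qval. f_equal. replace (S (pred (2 ^ t))) with (2 ^ t)%nat.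
  - rewrite pow_INR. reflexivity.
  - pose proof (Nat.pow_nonzero 2 t). lia.
Qed.

Lemma stage_eq n k :
  let p := run_clocked k (init_num n) in
  stage n k = match halt_num (csnd p) with
              | 0%nat => sign_of (cfst (csnd (csnd p))) / 2 ^ cfst p
              | S _ => 0
              end.
Proof.
  unfold stage, stage_a, stage_b, stage_c, stage_expr, halt_num, halt_expr.
  cbn [eden nth]. rewrite eden_clocked_expr. cbn zeta.
  destruct (_ + _)%nat.
  - rewrite qval_pow2. unfold sign_of. destruct (cfst _); simpl; lra.
  - unfold qval. simpl. lra.
Qed.

Lemma stage_before n k : (forall i, (i <= k)%nat -> ~ halts_at n i) -> stage n k = 0.
Proof.
  intro Hrun. rewrite stage_eq, run_clocked_running by (intros i Hi; apply Hrun; lia).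
  rewrite csnd_cpair. destruct (halt_num (run_num k (init_num n))) eqn:E; [|reflexivity].
  exfalso. exact (Hrun k (Nat.le_refl k) E).
Qed.

Definition halt_value (n h : nat) : R := sign_of (cfst (csnd (run_num h (init_num n)))) / 2 ^ h.

Lemma stage_after n h k : first_halt n h -> (h <= k)%nat -> stage n k = halt_value n h.
Proof.
  intros [Hh Hbefore] Hk. rewrite stage_eq, (run_clocked_halted _ h) by assumption.
  now rewrite csnd_cpair, cfst_cpair, Hh.
Qed.

Definition halt_time (n : nat) : nat := epsilon (inhabits 0%nat) (halts_at n).

(* [halt_time n] is an arbitrary halting time when there is one; the stages
   are constant from the first one on. *)
Definition diag (n : nat) : R := stage n (halt_time n).

Lemma diag_halts n h : first_halt n h -> diag n = halt_value n h.
Proof.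
  intro Hh. unfold diag. apply stage_after; [exact Hh|]. apply (first_halt_le n); [exact Hh|].
  unfold halt_time. apply epsilon_spec. exists h. apply Hh.
Qed.

Lemma diag_runs n : (forall h, ~ halts_at n h) -> diag n = 0.
Proof. intro Hn. unfold diag. apply stage_before. intros i _. apply Hn. Qed.

Lemma halt_value_abs n h : Rabs (halt_value n h) = / 2 ^ h.
Proof.
  unfold halt_value, Rdiv. pose proof (inv_pow2_pos h).
  rewrite Rabs_mult, (Rabs_pos_eq (/ _)) by lra.
  unfold sign_of. destruct (cfst _); unfold Rabs; destruct (Rcase_abs _); lra.
Qed.

Lemma diag_cases n :
  (diag n = 0 /\ forall k, stage n k = 0) \/
  (exists h, (1 <= h)%nat /\ diag n = halt_value n h /\
             (forall k, (k < h)%nat -> stage n k = 0) /\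
             (forall k, (h <= k)%nat -> stage n k = diag n)).
Proof.
  destruct (classic (exists h, halts_at n h)) as [[h0 Hh0] | Hnever].
  - right. destruct (first_halt_exists n h0 Hh0) as [h Hh]. exists h.
    rewrite (diag_halts n h Hh). repeat split.
    + exact (first_halt_pos n h Hh).
    + intros k Hk. apply stage_before. intros i Hi. apply Hh. lia.
    + intros k Hk. now apply stage_after.
  - left. split.
    + apply diag_runs. intros h Hh. apply Hnever. now exists h.
    + intro k. apply stage_before. intros i _ Hi. apply Hnever. now exists i.
Qed.

Lemma diag_fast_computable : fast_computable diag.
Proof.
  exists (fun n k => eden stage_a [n; k]), (fun n k => eden stage_b [n; k]),
    (fun n k => eden stage_c [n; k]).
  repeat split; try (apply recursive2_expr; cbv -[lt]; repeat split; intros; lia).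
  intros n k. fold (stage n k). pose proof (inv_pow2_pos k).
  destruct (diag_cases n) as [[-> Hz] | (h & Hh1 & Hd & Hlo & Hhi)].
  - rewrite Hz, Rminus_0_r, Rabs_R0. lra.
  - destruct (Nat.lt_ge_cases k h) as [Hk | Hk].
    + rewrite Hlo, Rminus_0_l, Rabs_Ropp, Hd, halt_value_abs by exact Hk.
      apply inv_pow2_le. lia.
    + rewrite Hhi, Rminus_diag, Rabs_R0 by exact Hk. lra.
Qed.

Lemma diag_abs_le n : Rabs (diag n) <= / 2.
Proof.
  destruct (diag_cases n) as [[-> _] | (h & Hh1 & -> & _)].
  - rewrite Rabs_R0. lra.
  - rewrite halt_value_abs. pose proof (inv_pow2_le 1 h Hh1) as Hh. simpl in Hh. lra.
Qed.

Lemma diag_sign c y : eval c [enc_code c] y ->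
  (y = 0%nat -> 0 < diag (enc_code c)) /\ ((0 < y)%nat -> diag (enc_code c) < 0).
Proof.
  intro Hc. set (n := enc_code c).
  destruct (eval_reaches _ _ _ Hc []) as [j Hj].
  assert (Hrun : run_num j (init_num n) = enc_state (Ret y [])) by
    (unfold n; now rewrite init_num_enc, run_num_enc, Hj).
  assert (Hhalt : halts_at n j) by (unfold halts_at; rewrite Hrun; apply halt_num_ret).
  destruct (first_halt_exists n j Hhalt) as [h Hh].
  rewrite (diag_halts n h Hh). unfold halt_value.
  rewrite <- (run_num_halted _ h j (first_halt_le n h j Hh Hhalt) (proj1 Hh)), Hrun.
  cbn [enc_state]. rewrite csnd_cpair, cfst_cpair. pose proof (inv_pow2_pos h).
  unfold sign_of, Rdiv. split; intro Hy; [subst y | destruct y; [lia|]]; lra.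
Qed.

Lemma seq_bounded_diag : seq_bounded diag.
Proof. exists (/ 2). apply diag_abs_le. Qed.

Lemma diag_sign_not_computable (w : nat -> R) : fast_computable w ->
  ~ (forall n, (0 < diag n -> w n = 1) /\ (diag n < 0 -> w n = 0)).
Proof.
  intros (a & b & c & Ha & Hb & Hc & Happrox) Hw.
  set (rho n := (2 * a n 2%nat - (2 * b n 2%nat + S (c n 2%nat)))%nat).
  assert (Hrho : recursive1 rho).
  { apply (recursive1_diagonal (fun n _ => rho n)). unfold rho. solve_recursive2. }
  destruct Hrho as [r Hr]. set (e := enc_code r).
  destruct (diag_sign r (rho e) (Hr e)) as [Hpos Hneg]. fold e in Hpos, Hneg.
  specialize (Happrox e 2%nat). specialize (Hw e).
  set (q := qval (a e 2%nat) (b e 2%nat) (c e 2%nat)) in Happrox.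
  replace (/ 2 ^ 2) with (1 / 4) in Happrox by (simpl; field).
  apply Rabs_le_between in Happrox.
  destruct (rho e) as [|y] eqn:Erho.
  - rewrite (proj1 Hw (Hpos eq_refl)) in *.
    pose proof (qval_gt_half (a e 2%nat) (b e 2%nat) (c e 2%nat) ltac:(fold q; lra)).
    unfold rho in Erho. lia.
  - rewrite (proj2 Hw (Hneg (Nat.lt_0_succ y))) in *.
    pose proof (qval_le_half (a e 2%nat) (b e 2%nat) (c e 2%nat) ltac:(fold q; lra)).
    unfold rho in Erho. lia.
Qed.

(** * Mutual information and optimal channels *)

Lemma ln_le_sub1 t : 0 < t -> ln t <= t - 1.
Proof. intro Ht. pose proof (exp_ineq1_le (ln t)) as H. rewrite exp_ln in H; lra. Qed.

Lemma ln_eq_sub1 t : 0 < t -> ln t = t - 1 -> t = 1.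
Proof.
  intros Ht E. destruct (Req_dec (ln t) 0) as [Z | Z].
  - now rewrite <- (exp_ln t), Z, exp_0.
  - pose proof (exp_ineq1 _ Z) as H. rewrite exp_ln in H; lra.
Qed.

Lemma ln2_pos : 0 < ln 2.
Proof. rewrite <- ln_1. apply ln_increasing; lra. Qed.

(* [j - m <= j ln (j / m)] is [ln u <= u - 1] at [u = m / j]. *)
Lemma log_ratio_ge j m : 0 < j -> 0 < m -> j - m <= j * ln (j / m).
Proof.
  intros Hj Hm. rewrite <- (Rinv_div m j), ln_Rinv by (apply Rdiv_lt_0_compat; lra).
  pose proof (ln_le_sub1 (m / j) ltac:(apply Rdiv_lt_0_compat; lra)) as H.
  apply (Rmult_le_compat_l j) in H; [|lra].
  replace (j * (m / j - 1)) with (m - j) in H by (field; lra). lra.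
Qed.

Lemma log_ratio_eq j m : 0 < j -> 0 < m -> j * ln (j / m) = j - m -> j = m.
Proof.
  intros Hj Hm E. rewrite <- (Rinv_div m j), ln_Rinv in E by (apply Rdiv_lt_0_compat; lra).
  assert (Hu : ln (m / j) = m / j - 1).
  { apply (Rmult_eq_reg_l j); [|lra]. replace (j * (m / j - 1)) with (m - j) by (field; lra). lra. }
  apply ln_eq_sub1 in Hu; [|apply Rdiv_lt_0_compat; lra].
  apply (Rmult_eq_compat_l j) in Hu. replace (j * (m / j)) with m in Hu by (field; lra). lra.
Qed.

Definition info_term (j m : R) : R := if Req_EM_T j 0 then 0 else j * ln (j / m) / ln 2.

Lemma mutual_info_terms P W : mutual_info P W =
  sum2 (fun x => sum2 (fun y => info_term (P x * W x y) (P x * out_dist P W y))).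
Proof. reflexivity. Qed.

Lemma info_term_ge j m : 0 <= j -> 0 <= m -> (0 < j -> 0 < m) -> (j - m) / ln 2 <= info_term j m.
Proof.
  intros Hj Hm Hjm. pose proof ln2_pos. unfold info_term. destruct (Req_EM_T j 0) as [-> | Hj0].
  - unfold Rdiv.
    assert (0 <= m * / ln 2) by (apply Rmult_le_pos; [lra | left; apply Rinv_0_lt_compat; lra]).
    lra.
  - apply Rmult_le_compat_r; [left; apply Rinv_0_lt_compat; lra|].
    apply log_ratio_ge; [|apply Hjm]; lra.
Qed.

Lemma info_term_eq j m : 0 <= j -> 0 <= m -> (0 < j -> 0 < m) ->
  info_term j m = (j - m) / ln 2 -> j = m.
Proof.
  intros Hj Hm Hjm E. pose proof ln2_pos. unfold info_term in E.
  destruct (Req_EM_T j 0) as [-> | Hj0].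
  - assert (Hm0 : m * / ln 2 = 0) by (unfold Rdiv in E; lra).
    apply Rmult_integral in Hm0 as [Hm0 | Hinv]; [lra|].
    exfalso. revert Hinv. apply Rinv_neq_0_compat. lra.
  - apply log_ratio_eq; [lra | apply Hjm; lra|].
    apply (Rmult_eq_reg_r (/ ln 2)); [exact E | apply Rinv_neq_0_compat; lra].
Qed.

Lemma out_dist_nonneg P W y : is_dist P -> is_channel W -> 0 <= out_dist P W y.
Proof.
  intros [HP _] HW. unfold out_dist, sum2.
  pose proof (HP false). pose proof (HP true).
  pose proof (proj1 (HW false) y). pose proof (proj1 (HW true) y). nra.
Qed.

Lemma joint_le_out_dist P W x y :
  is_dist P -> is_channel W -> P x * W x y <= out_dist P W y.
Proof.
  intros [HP _] HW. unfold out_dist, sum2.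
  pose proof (HP false). pose proof (HP true).
  pose proof (proj1 (HW false) y). pose proof (proj1 (HW true) y). destruct x; nra.
Qed.

(* Each term [info_term j m] is at least [(j - m) / ln 2], and these lower
   bounds sum to [0]; so [mutual_info <= 0] forces equality in every term. *)
Lemma mutual_info_nonpos_indep P W : is_dist P -> is_channel W -> mutual_info P W <= 0 ->
  forall x y, P x * W x y = P x * out_dist P W y.
Proof.
  intros HP HW Hmi.
  set (j x y := P x * W x y). set (m x y := P x * out_dist P W y).
  assert (Hj : forall x y, 0 <= j x y)
    by (intros; apply Rmult_le_pos; [apply HP | apply HW]).
  assert (Hm : forall x y, 0 <= m x y)
    by (intros; apply Rmult_le_pos; [apply HP | now apply out_dist_nonneg]).
  assert (Hjm : forall x y, 0 < j x y -> 0 < m x y).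
  { intros x y Hpos. unfold j, m in *.
    assert (0 < P x) by (destruct (proj1 HP x) as [Hx | Hx]; [easy | rewrite <- Hx in Hpos; lra]).
    pose proof (joint_le_out_dist P W x y HP HW). apply Rmult_lt_0_compat; lra. }
  assert (Hge : forall x y, (j x y - m x y) / ln 2 <= info_term (j x y) (m x y))
    by (intros; apply info_term_ge; auto).
  assert (Hsum : sum2 (fun x => sum2 (fun y => j x y - m x y)) = 0).
  { destruct HP as [_ HP]. unfold j, m, out_dist, sum2 in *.
    pose proof (proj2 (HW false)) as Hfalse. pose proof (proj2 (HW true)) as Htrue.
    unfold sum2 in *. replace 1 with (P false + P true) in Hfalse, Htrue by exact HP.
    nra. }
  rewrite mutual_info_terms in Hmi. pose proof ln2_pos.
  change (sum2 (fun x => sum2 (fun y => info_term (j x y) (m x y))) <= 0) in Hmi.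
  assert (Hzero : forall x y, info_term (j x y) (m x y) = (j x y - m x y) / ln 2).
  { unfold sum2 in *. pose proof (Hge false false). pose proof (Hge false true).
    pose proof (Hge true false). pose proof (Hge true true).
    assert (Hs : (j false false - m false false) / ln 2 + (j false true - m false true) / ln 2 +
                 ((j true false - m true false) / ln 2 + (j true true - m true true) / ln 2) = 0).
    { unfold Rdiv. rewrite <- !Rmult_plus_distr_r, Hsum. ring. }
    intros [|] [|]; lra. }
  intros x y. apply (info_term_eq (j x y) (m x y)); auto.
Qed.

Definition const_channel (b : bool) (x y : bool) : R := if Bool.eqb y b then 1 else 0.

Lemma const_channel_is_channel b : is_channel (const_channel b).
Proof.
  intro x. split.
  - intro y. unfold const_channel. destruct (Bool.eqb y b); lra.
  - unfold sum2, const_channel. destruct b; simpl; lra.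
Qed.

Lemma info_term_diag j : info_term j j = 0.
Proof.
  unfold info_term. destruct (Req_EM_T j 0); [reflexivity|].
  unfold Rdiv. rewrite Rinv_r, ln_1 by exact n. ring.
Qed.

Lemma mutual_info_const_channel P b : is_dist P -> mutual_info P (const_channel b) = 0.
Proof.
  intros [_ HP]. unfold sum2 in HP.
  assert (Hout : forall y, out_dist P (const_channel b) y = const_channel b false y).
  { intro y. unfold out_dist, sum2, const_channel. destruct (Bool.eqb y b); lra. }
  rewrite mutual_info_terms. unfold sum2. rewrite !Hout.
  unfold const_channel at 1 3 5 7. simpl. rewrite !info_term_diag. ring.
Qed.

Lemma exp_distortion_dmat d01 d10 P W :
  exp_distortion (dmat d01 d10) P W = P false * W false true * d01 + P true * W true false * d10.
Proof. unfold exp_distortion, sum2; simpl; ring. Qed.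

Lemma Dmax_dmat d01 d10 P : Dmax (dmat d01 d10) P = Rmin (P true * d10) (P false * d01).
Proof. unfold Dmax, sum2; simpl. f_equal; ring. Qed.

Lemma optimal_channel_Dmax_indep d01 d10 P W : is_dist P ->
  optimal_channel (dmat d01 d10) (Dmax (dmat d01 d10) P) P W ->
  forall x y, 0 < P x -> W x y = out_dist P W y.
Proof.
  intros HP [[HW _] Hopt] x y Hx.
  set (b := if Rle_dec (P true * d10) (P false * d01) then false else true).
  assert (Hb : admissible (dmat d01 d10) (Dmax (dmat d01 d10) P) P (const_channel b)).
  { split; [apply const_channel_is_channel|].
    rewrite exp_distortion_dmat, Dmax_dmat. unfold b, const_channel, Rmin.
    destruct (Rle_dec (P true * d10) (P false * d01)); simpl; lra. }
  pose proof (Hopt _ Hb) as Hle. rewrite mutual_info_const_channel in Hle by exact HP.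
  apply (Rmult_eq_reg_l (P x)); [|lra]. now apply mutual_info_nonpos_indep.
Qed.

Lemma optimal_channel_dmat_sign d01 d10 P W : 0 < d01 -> 0 < d10 -> is_dist P ->
  0 < P false -> 0 < P true ->
  optimal_channel (dmat d01 d10) (Dmax (dmat d01 d10) P) P W ->
  (P false * d01 < P true * d10 -> W false true = 1) /\
  (P true * d10 < P false * d01 -> W false true = 0).
Proof.
  intros H01 H10 HP Pf Pt Hopt.
  pose proof (optimal_channel_Dmax_indep d01 d10 P W HP Hopt) as Hind.
  destruct Hopt as [[HW HD] _].
  rewrite exp_distortion_dmat, Dmax_dmat in HD.
  assert (Hq : W true false = 1 - W false true).
  { pose proof (proj2 (HW true)) as Hs. unfold sum2 in Hs.
    rewrite (Hind true true Pt), <- (Hind false true Pf) in Hs. lra. }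
  rewrite Hq in HD.
  pose proof (proj1 (HW false) true). pose proof (proj1 (HW false) false).
  pose proof (proj2 (HW false)) as Hs. unfold sum2 in Hs.
  split; intro Hlt.
  - rewrite Rmin_right in HD by lra.
    assert ((1 - W false true) * (P true * d10 - P false * d01) <= 0) by nra.
    destruct (Req_dec (W false true) 1); [assumption|]. nra.
  - rewrite Rmin_left in HD by lra.
    assert (W false true * (P false * d01 - P true * d10) <= 0) by nra.
    destruct (Req_dec (W false true) 0); [assumption|]. nra.
Qed.

Lemma seq_bounded_dist (P : nat -> bool -> R) x :
  (forall n, is_dist (P n)) -> seq_bounded (fun n => P n x).
Proof.
  intro HP. exists 1. intro n. destruct (HP n) as [Hnn Hs]. unfold sum2 in Hs.
  pose proof (Hnn false). pose proof (Hnn true). rewrite Rabs_pos_eq by auto. destruct x; lra.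
Qed.

Section Source.

Variables d01 d10 : R.
Hypotheses (H01 : 0 < d01) (H10 : 0 < d10).

Definition source (n : nat) (x : bool) : R :=
  if x then (d01 + Rmin d01 d10 * diag n) / (d01 + d10)
  else (d10 - Rmin d01 d10 * diag n) / (d01 + d10).

Lemma tilt_bound n : Rabs (Rmin d01 d10 * diag n) <= Rmin d01 d10 / 2.
Proof.
  pose proof (diag_abs_le n). assert (0 < Rmin d01 d10) by (apply Rmin_glb_lt; lra).
  rewrite Rabs_mult, Rabs_pos_eq by lra. unfold Rdiv. apply Rmult_le_compat_l; lra.
Qed.

Lemma source_pos n x : 0 < source n x.
Proof.
  pose proof (tilt_bound n) as Ht. apply Rabs_le_between in Ht.
  pose proof (Rmin_l d01 d10). pose proof (Rmin_r d01 d10).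
  assert (0 < Rmin d01 d10) by (apply Rmin_glb_lt; lra).
  unfold source. destruct x; apply Rdiv_lt_0_compat; lra.
Qed.

Lemma source_dist n : is_dist (source n).
Proof.
  split; [intro x; left; apply source_pos|].
  unfold sum2, source. field. lra.
Qed.

Lemma source_cost_gap n :
  source n true * d10 - source n false * d01 = Rmin d01 d10 * diag n.
Proof. unfold source. field. lra. Qed.

Lemma optimal_source_channel_sign n W :
  optimal_channel (dmat d01 d10) (Dmax (dmat d01 d10) (source n)) (source n) W ->
  (0 < diag n -> W false true = 1) /\ (diag n < 0 -> W false true = 0).
Proof.
  intro Hopt. assert (Hm : 0 < Rmin d01 d10) by (apply Rmin_glb_lt; lra).
  pose proof (source_cost_gap n) as Hgap.
  destruct (optimal_channel_dmat_sign d01 d10 (source n) W H01 H10 (source_dist n)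
              (source_pos n false) (source_pos n true) Hopt) as [Hone Hzero].
  split; intro Hd; [apply Hone | apply Hzero]; nra.
Qed.

Lemma Dmax_source_nonneg n : 0 <= Dmax (dmat d01 d10) (source n).
Proof.
  rewrite Dmax_dmat. pose proof (source_pos n true). pose proof (source_pos n false).
  apply Rmin_glb; apply Rmult_le_pos; lra.
Qed.

Hypotheses (C01 : computable_real d01) (C10 : computable_real d10).

Lemma tilt_fast_computable : fast_computable (fun n => Rmin d01 d10 * diag n).
Proof.
  apply fast_computable_mul; [| apply diag_fast_computable | apply seq_bounded_const
                             | apply seq_bounded_diag].
  apply (fast_computable_min (fun _ => d01) (fun _ => d10)); now apply fast_computable_const.
Qed.

Lemma seq_bounded_tilt : seq_bounded (fun n => Rmin d01 d10 * diag n).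
Proof. exists (Rmin d01 d10 / 2). apply tilt_bound. Qed.

Lemma source_fast_computable x : fast_computable (fun n => source n x).
Proof.
  assert (Hinv : fast_computable (fun _ => / (d01 + d10))).
  { apply (fast_computable_inv (fun _ => d01 + d10)).
    - apply (fast_computable_add (fun _ => d01) (fun _ => d10)); now apply fast_computable_const.
    - exists (d01 + d10). split; [lra | intro; lra]. }
  unfold source. destruct x; apply fast_computable_mul; try apply Hinv; try apply seq_bounded_const.
  - apply fast_computable_add; [now apply fast_computable_const | apply tilt_fast_computable].
  - apply seq_bounded_add; [apply seq_bounded_const | apply seq_bounded_tilt].
  - apply fast_computable_add; [now apply fast_computable_const|].
    apply fast_computable_opp, tilt_fast_computable.
  - apply seq_bounded_add; [apply seq_bounded_const | apply seq_bounded_opp, seq_bounded_tilt].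
Qed.

Lemma Dmax_source_fast_computable : fast_computable (fun n => Dmax (dmat d01 d10) (source n)).
Proof.
  apply (fast_computable_ext (fun n => Rmin (source n true * d10) (source n false * d01)));
    [|intro n; symmetry; apply Dmax_dmat].
  apply fast_computable_min; apply fast_computable_mul;
    solve [apply source_fast_computable | now apply fast_computable_const
          | apply seq_bounded_const | apply seq_bounded_dist, source_dist].
Qed.

End Source.

Theorem mainTheorem6 :
  forall d01 d10 : R,
    computable_real d01 -> computable_real d10 -> 0 < d01 -> 0 < d10 ->
    exists P : nat -> bool -> R,
      (forall n, is_dist (P n)) /\
      (forall x, computable_seq (fun n => P n x)) /\
      computable_seq (fun n => Dmax (dmat d01 d10) (P n)) /\
      forall F : (bool -> R) -> R -> (bool -> bool -> R),
        (forall n, optimal_channel (dmat d01 d10) (Dmax (dmat d01 d10) (P n))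
                     (P n) (F (P n) (Dmax (dmat d01 d10) (P n)))) ->
        ~ BM_computable F.
Proof.
  intros d01 d10 C01 C10 H01 H10.
  exists (source d01 d10). split; [|split; [|split]].
  - exact (source_dist d01 d10 H01 H10).
  - intro x. now apply computable_seq_fast, source_fast_computable.
  - now apply computable_seq_fast, Dmax_source_fast_computable.
  - intros F Hopt HBM.
    apply (diag_sign_not_computable
             (fun n => F (source d01 d10 n) (Dmax (dmat d01 d10) (source d01 d10 n)) false true)).
    + apply fast_computable_seq, HBM.
      * exact (source_dist d01 d10 H01 H10).
      * exact (Dmax_source_nonneg d01 d10 H01 H10).
      * intro x. now apply computable_seq_fast, source_fast_computable.
      * now apply computable_seq_fast, Dmax_source_fast_computable.
    + intro n. exact (optimal_source_channel_sign d01 d10 H01 H10 n _ (Hopt n)).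
Qed.
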